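(* Consider a sequence of graphs $G=G_n$ on $n$ nodes with maximum degree $d_{\max}=\Omega(n^{\alpha})$ for some $\alpha>0$, and an SIS epidemic on $G$ with intrinsic infection rate $\beta=\Omega\left(n^{-\alpha(1-\epsilon)}\right)$ for some $\epsilon>0$ (cure rate $1$). Then for any initial infected set there exists an external infection policy with virulence $\mu=O(1)$ such that, for some $\lambda=\Theta(1)$, $\lambda>0$, $$\mathbb{E}[T_{SIS}]=\Omega(n^{\lambda}).$$
   Context: SIS epidemic with external agents on $G=(V,E)$, $|V|=n$: each node $j$ is in state $X_j(t)\in\{0,1\}$ (susceptible/infected). A susceptible node $j$ becomes infected at rate $\beta\sum_{i:(i,j)\in E}X_i(t)+L_j(t)$; an infected node becomes susceptible at rate $1$. The external infection vector $L(t)$ satisfies $L_j(t)\ge0$, $\|L(t)\|_1\le\mu$, may depend on the state and history, and is $\mathbf{0}$ whenever no node is infected. $T_{SIS}=\inf\{t:\mathbf{X}(t)=\mathbf{0}\}$. *)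

From HB Require Import structures.
From mathcomp Require Import all_boot all_order all_algebra.
From mathcomp Require Import all_classical all_reals all_analysis.
Set Implicit Arguments. Unset Strict Implicit. Unset Printing Implicit Defensive.
Import Order.TTheory GRing.Theory Num.Theory.
Local Open Scope ring_scope.

Section SIS.
Variables (R : realType) (n : nat).

Definition simple_graph (e : rel 'I_n) : Prop := symmetric e /\ irreflexive e.

Definition deg (e : rel 'I_n) (v : 'I_n) : nat := #|[set u | e v u]|.

Definition dmax (e : rel 'I_n) : nat := (\max_(v : 'I_n) deg e v)%N.

(* A (stationary, state-feedback) external infection policy with virulence mu:
   L S j is the external infection rate on node j when the infected set is S. *)
Definition is_policy (mu : R) (L : {set 'I_n} -> 'I_n -> R) : Prop :=
  (forall S j, 0 <= L S j) /\
  (forall S, \sum_(j : 'I_n) L S j <= mu) /\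
  (forall j, L (@finset.set0 _) j = 0).

Definition rate (e : rel 'I_n) (beta : R) (L : {set 'I_n} -> 'I_n -> R)
    (S T : {set 'I_n}) : R :=
  \sum_(j | j \notin S)
     (T == j |: S)%:R * (beta * (#|[set i in S | e i j]|)%:R + L S j)
  + \sum_(j in S) (T == S :\ j)%:R.

Definition outrate e beta L (S : {set 'I_n}) : R :=
  \sum_(T : {set 'I_n}) rate e beta L S T.

(* uniformization constant: bounds every total outflow rate *)
Definition unif e beta L : R := 1 + \sum_(S : {set 'I_n}) outrate e beta L S.

Definition trans e beta L (S T : {set 'I_n}) : R :=
  rate e beta L S T / unif e beta L
  + (S == T)%:R * (1 - outrate e beta L S / unif e beta L).

Fixpoint dist e beta L (A : {set 'I_n}) (k : nat) : {set 'I_n} -> R :=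
  match k with
  | 0 => fun S => (S == A)%:R
  | k'.+1 => fun T => \sum_(S : {set 'I_n}) dist e beta L A k' S * trans e beta L S T
  end.

(* E[T_SIS] from initial infected set A:
   E[T] = int_0^oo P(X_t <> 0) dt = (1/Lam) sum_k P(Y_k <> 0)  (uniformization). *)
Definition ET e beta L (A : {set 'I_n}) : \bar R :=
  (\sum_(0 <= k <oo)
     ((\sum_(S : {set 'I_n} | S != @finset.set0 _) dist e beta L A k S) / unif e beta L)%:E)%E.

End SIS.

(* Let h be a vertex of maximal degree d, and let the external agent reinfect
   h at rate 2 whenever h is healthy while the epidemic is alive.  Write m for
   the number of infected neighbours of h and pick K ~ n^lam with 2 K <= d and
   2 (K + 1)^2 <= beta d, which the growth assumptions allow.  The potential
     K + sum_(i < m) a_i                      if h is infected,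
     K + sum_(i < m) a_i - K / (min(m,K) + 1)  if h is healthy,
   where a_i = 1 / ((K + 1) (i + 1)) for i < K and a_i = 0 otherwise, plus K/4
   on every nonempty state, has drift at least -1 in every live state: an
   infected hub infects its d - m healthy neighbours fast enough to pay for
   its own recovery, and a healthy hub is reinfected fast enough to make up
   for the gap K / (m + 1).  On the uniformized chain such a potential forces
   E[T_SIS] >= K/8. *)

From Pilot Require Import Defs.
From HB Require Import structures.
From mathcomp Require Import all_boot all_order all_algebra.
From mathcomp Require Import all_classical all_reals all_analysis.
From mathcomp Require Import ring lra zify.
Import Order.TTheory GRing.Theory Num.Theory.
Local Open Scope ring_scope.
Set Implicit Arguments. Unset Strict Implicit.

Local Notation set0 := (@finset.set0 _).

Section Uniformization.
Variables (R : realType) (n : nat) (e : rel 'I_n) (beta : R)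
  (L : {set 'I_n} -> 'I_n -> R).
Hypothesis beta_ge0 : 0 <= beta.
Hypothesis L_ge0 : forall S j, 0 <= L S j.
Hypothesis L_set0 : forall j, L set0 j = 0.
Implicit Types (S T : {set 'I_n}) (j : 'I_n) (f : {set 'I_n} -> R).

Local Notation rate := (rate e beta L).
Local Notation outrate := (outrate e beta L).
Local Notation unif := (unif e beta L).
Local Notation trans := (trans e beta L).

Definition infection_rate S j := beta * #|[set i in S | e i j]|%:R + L S j.

Definition drift f S := \sum_T rate S T * (f T - f S).

Lemma infection_rate_ge0 S j : 0 <= infection_rate S j.
Proof. by rewrite addr_ge0 ?mulr_ge0. Qed.

Lemma rate_ge0 S T : 0 <= rate S T.
Proof.
rewrite /Defs.rate addr_ge0 //; apply: sumr_ge0 => j _ //.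
exact: mulr_ge0 (infection_rate_ge0 S j).
Qed.

Lemma outrate_ge0 S : 0 <= outrate S.
Proof. by apply: sumr_ge0 => T _; apply: rate_ge0. Qed.

Lemma outrate_le_unif S : outrate S <= unif - 1.
Proof.
rewrite /unif addrC addKr (bigD1 S) //= lerDl.
by apply: sumr_ge0 => T _; exact: outrate_ge0.
Qed.

Lemma unif_gt0 : 0 < unif.
Proof. by have := outrate_le_unif set0; have := outrate_ge0 set0; lra. Qed.

Lemma trans_ge0 S T : 0 <= trans S T.
Proof.
have unif0 := unif_gt0.
rewrite /trans addr_ge0 ?divr_ge0 ?rate_ge0 ?(ltW unif0) // mulr_ge0 //.
rewrite subr_ge0 ler_pdivrMr // mul1r.
by have := outrate_le_unif S; lra.
Qed.

Lemma rate_set0 T : rate set0 T = 0.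
Proof.
rewrite /Defs.rate big1 ?big_set0 ?addr0 // => j _.
have -> : [set i in set0 | e i j] = set0 :> {set 'I_n}.
  by apply/setP => i; rewrite !inE.
by rewrite cards0 mulr0 add0r L_set0 mulr0.
Qed.

Lemma drift_set0 f : drift f set0 = 0.
Proof. by rewrite /drift big1 // => T _; rewrite rate_set0 mul0r. Qed.

Lemma drift_lin f g (c : R) S :
  drift (fun T => f T + c * g T) S = drift f S + c * drift g S.
Proof.
rewrite /drift mulr_sumr -big_split /=.
by apply: eq_bigr => T _; rewrite mulrCA -mulrDr; congr (_ * _); ring.
Qed.

Lemma driftE f S : drift f S =
  \sum_(j | j \notin S) infection_rate S j * (f (j |: S) - f S)
  + \sum_(j in S) (f (S :\ j) - f S).
Proof.
rewrite /drift /Defs.rate.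
under eq_bigr => T _ do rewrite mulrDl !mulr_suml.
rewrite big_split /=; congr (_ + _); rewrite exchange_big /=;
  apply: eq_bigr => j _.
  under eq_bigr => T _ do rewrite mulrAC.
  rewrite (bigD1 (j |: S)) //= eqxx mul1r big1 ?addr0; first by rewrite mulrC.
  by move=> T /negbTE ->; rewrite !mul0r.
rewrite (bigD1 (S :\ j)) //= eqxx mul1r big1 ?addr0 // => T /negbTE ->.
by rewrite mul0r.
Qed.

Lemma sum_transM f S :
  \sum_T trans S T * f T = f S + drift f S / unif.
Proof.
have unif0 := unif_gt0.
have -> : \sum_T trans S T * f T =
    (\sum_T rate S T * f T) / unif + (1 - outrate S / unif) * f S.
  rewrite /trans; under eq_bigr do rewrite mulrDl.
  rewrite big_split /=; congr (_ + _).
    by rewrite mulr_suml; apply: eq_bigr => T _; rewrite mulrAC.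
  rewrite (bigD1 S) //= eqxx mul1r big1 ?addr0 // => T.
  by rewrite eq_sym => /negbTE ->; rewrite !mul0r.
have -> : drift f S = \sum_T rate S T * f T - outrate S * f S.
  by rewrite /drift mulr_suml -sumrB; apply: eq_bigr => T _; rewrite mulrBr.
by field; exact: lt0r_neq0.
Qed.

Variable A : {set 'I_n}.
Local Notation dist := (dist e beta L A).

Lemma dist_ge0 k S : 0 <= dist k S.
Proof.
elim: k S => [|k IH] S /=; first by case: (S == A).
by apply: sumr_ge0 => T _; rewrite mulr_ge0 ?IH ?trans_ge0.
Qed.

Definition mean k f := \sum_S dist k S * f S.

Lemma meanS k f : mean k.+1 f = mean k (fun S => \sum_T trans S T * f T).
Proof.
rewrite /mean /=; under eq_bigr => T _ do rewrite mulr_suml.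
rewrite exchange_big /=; apply: eq_bigr => S _; rewrite mulr_sumr.
by apply: eq_bigr => T _; rewrite mulrA.
Qed.

Lemma mean0 f : mean 0 f = f A.
Proof.
rewrite /mean /= (bigD1 A) //= eqxx mul1r big1 ?addr0 // => S /negbTE ->.
by rewrite mul0r.
Qed.

Lemma ler_mean k f g : (forall S, f S <= g S) -> mean k f <= mean k g.
Proof. by move=> fg; apply: ler_sum => S _; rewrite ler_wpM2l ?dist_ge0. Qed.

Definition alive S : R := (S != set0)%:R.

Definition survival k := mean k alive.

Lemma survivalE k : survival k = \sum_(S | S != set0) dist k S.
Proof.
rewrite /survival /mean [RHS]big_mkcond /=; apply: eq_bigr => S _.
by rewrite /alive; case: (S != _); rewrite ?mulr1 ?mulr0.
Qed.

Lemma survival_ge0 k : 0 <= survival k.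
Proof. by apply: sumr_ge0 => S _; rewrite mulr_ge0 ?dist_ge0 ?ler0n. Qed.

Lemma survival_noninc k : survival k.+1 <= survival k.
Proof.
rewrite /survival meanS; apply: ler_mean => S; rewrite sum_transM.
have [->|S0] := eqVneq S set0; first by rewrite drift_set0 mul0r addr0.
rewrite gerDl pmulr_lle0 ?invr_gt0 ?unif_gt0 //.
apply: sumr_le0 => T _; rewrite mulr_ge0_le0 ?rate_ge0 //.
by rewrite /alive S0 subr_le0; case: (T != _).
Qed.

Lemma survival_mono k K : (k <= K)%N -> survival K <= survival k.
Proof.
move=> /subnK <-; elim: (K - k)%N => [|i IH]; first by rewrite add0n.
by rewrite addSn; apply: le_trans (survival_noninc _) IH.
Qed.

(* After K steps the mean of g is at least g(A) minus the expected time
   spent alive, and at most (max |g|) times the survival probability, which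
   is negligible once K >= (max |g|) * unif. *)
Lemma ET_ge_potential g : g set0 = 0 ->
  (forall S, S != set0 -> -1 <= drift g S) ->
  ((g A / 2)%:E <= ET e beta L A)%E.
Proof.
move=> g0 g_drift; have unif0 := unif_gt0.
pose G := \sum_S `|g S|.
have g_le S : g S <= G.
  apply: le_trans (ler_norm _) _; rewrite /G (bigD1 S) //= lerDl.
  by apply: sumr_ge0 => T _.
pose K := (Num.truncn (G * unif)).+1.
have GK : G * unif <= K%:R by apply/ltW/truncnS_gt.
have mean_step k : mean k g - survival k / unif <= mean k.+1 g.
  rewrite meanS /survival /mean mulr_suml -sumrB; apply: ler_sum => S _.
  rewrite -mulrA -mulrBr ler_wpM2l ?dist_ge0 // sum_transM lerD2l /alive.
  have [->|S0] := eqVneq S set0; first by rewrite drift_set0 mul0r oppr0.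
  by rewrite /= mul1r -mulN1r ler_wpM2r ?invr_ge0 ?(ltW unif0) ?g_drift.
have mean_tele : g A - \sum_(k < K) survival k / unif <= mean K g.
  rewrite -(mean0 g); elim: (K) => [|k IH]; first by rewrite big_ord0 subr0.
  by rewrite big_ord_recr /=; have := mean_step k; lra.
have mean_le : mean K g <= G * survival K.
  rewrite /survival /mean mulr_sumr; apply: ler_sum => S _.
  rewrite /alive; have [->|S0] := eqVneq S set0; first by rewrite g0 !mulr0.
  by rewrite mulr1 mulrC ler_wpM2r ?dist_ge0.
have survival_tail : G * survival K <= \sum_(k < K) survival k / unif.
  apply: le_trans (_ : K%:R * (survival K / unif) <= _).
    rewrite mulrA mulrAC ler_wpM2r ?survival_ge0 //.
    by rewrite ler_pdivlMr.
  have -> : K%:R * (survival K / unif) = \sum_(k < K) survival K / unif.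
    by rewrite sumr_const card_ord mulr_natl.
  by apply: ler_sum => k _; rewrite ler_wpM2r ?invr_ge0 ?(ltW unif0) // survival_mono // ltnW.
apply: le_trans (_ : (\sum_(k < K) survival k / unif)%:E <= _)%E.
  by rewrite lee_fin; lra.
apply: le_trans (nneseries_lim_ge K _); last first.
  by move=> k _ _; rewrite lee_fin -survivalE divr_ge0 ?survival_ge0 ?ltW.
by rewrite sumEFin big_mkord lee_fin; apply: ler_sum => k _; rewrite survivalE.
Qed.

End Uniformization.

Arguments alive R {n} S.

Section HubPotential.
Variables (R : realFieldType) (K : nat).
Implicit Types m : nat.

Definition hub_gain m : R := K%:R / (minn m K).+1%:R.

Definition nbr_gain m : R :=
  if (m < K)%N then ((K.+1)%:R * (m.+1)%:R)^-1 else 0.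

Definition pot_in m : R := K%:R + \sum_(i < m) nbr_gain i.

Definition pot_out m : R := pot_in m - hub_gain m.

Lemma hub_gain_small m : (m <= K)%N -> hub_gain m = K%:R / (m.+1)%:R.
Proof. by move=> mK; rewrite /hub_gain (minn_idPl mK). Qed.

Lemma hub_gain_large m : (K <= m)%N -> hub_gain m = K%:R / (K.+1)%:R.
Proof. by move=> Km; rewrite /hub_gain (minn_idPr Km). Qed.

Lemma nbr_gain_small m : (m < K)%N -> nbr_gain m = ((K.+1)%:R * (m.+1)%:R)^-1.
Proof. by move=> mK; rewrite /nbr_gain mK. Qed.

Lemma nbr_gain_large m : (K <= m)%N -> nbr_gain m = 0.
Proof. by move=> Km; rewrite /nbr_gain ltnNge Km. Qed.

Lemma nbr_gain_ge0 m : 0 <= nbr_gain m.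
Proof. by rewrite /nbr_gain; case: ifP; rewrite ?invr_ge0 ?mulr_ge0. Qed.

Lemma hub_gain_leK m : hub_gain m <= K%:R.
Proof. by rewrite ler_pdivrMr ?ltr0Sn // ler_peMr ?ler0n // ler1n. Qed.

Lemma hub_gain_noninc m : hub_gain m.+1 <= hub_gain m.
Proof.
rewrite ler_wpM2l ?ler0n // lef_pV2 ?posrE ?ltr0Sn // ler_nat; lia.
Qed.

Lemma pot_inS m : pot_in m.+1 = pot_in m + nbr_gain m.
Proof. by rewrite /pot_in big_ord_recr /= addrA. Qed.

Lemma pot_in_ge m : K%:R <= pot_in m.
Proof. by rewrite lerDl; apply: sumr_ge0 => i _; exact: nbr_gain_ge0. Qed.

Lemma pot_out_ge0 m : 0 <= pot_out m.
Proof. by rewrite subr_ge0; apply: le_trans (hub_gain_leK m) (pot_in_ge m). Qed.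

Lemma pot_out0 : pot_out 0 = 0.
Proof. by rewrite /pot_out /pot_in big_ord0 addr0 /hub_gain min0n divr1 subrr. Qed.

Lemma pot_outS m : pot_out m.+1 - pot_out m = nbr_gain m + hub_gain m - hub_gain m.+1.
Proof. rewrite /pot_out pot_inS; ring. Qed.

Lemma pot_out_nondecr m : pot_out m <= pot_out m.+1.
Proof.
by have := pot_outS m; have := nbr_gain_ge0 m; have := hub_gain_noninc m; lra.
Qed.

Variables (d : nat) (beta : R).
Hypothesis beta_ge0 : 0 <= beta.
Hypothesis K_le_deg : (2 * K <= d)%N.
Hypothesis beta_deg_ge : 2 * (K.+1)%:R ^+ 2 <= beta * d%:R.

Let x : R := (K.+1)%:R.
Let x_gt0 : 0 < x. Proof. exact: ltr0Sn. Qed.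
Let xE : x = K%:R + 1. Proof. by rewrite /x -addn1 natrD. Qed.

Lemma hub_infected_drift_large m : (K <= m)%N ->
  -1 + K%:R / 4 * (m == 0)%:R <=
  - hub_gain m - m%:R * nbr_gain m.-1 + (d%:R - m%:R) * (beta * nbr_gain m).
Proof.
move=> Km; rewrite hub_gain_large // (nbr_gain_large Km) !mulr0 addr0 -/x.
have hub : K%:R / x + x^-1 = 1 by rewrite xE; field; rewrite -xE gt_eqF.
have nbr : m%:R * nbr_gain m.-1 <= x^-1.
  rewrite /nbr_gain; case: ltnP => [m1K|]; last by rewrite mulr0 invr_ge0 ltW.
  have mK : m = K by lia.
  subst m; have K0 : K%:R != 0 :> R by rewrite pnatr_eq0; lia.
  by rewrite prednK; [rewrite invfM mulrCA divff // mulr1 | lia].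
have -> : K%:R / 4 * (m == 0)%:R = 0 :> R.
  case: eqP => [m0|_]; last by rewrite mulr0.
  have -> : K = 0%N by lia.
  by rewrite !mul0r.
(* [lra] only uses linear facts: the nonlinear atoms are named first. *)
by rewrite addr0; move: hub nbr; move: (K%:R / x) (x^-1) => a c; lra.
Qed.

Lemma hub_infected_drift_small m : (m < K)%N ->
  -1 + K%:R / 4 * (m == 0)%:R <=
  - hub_gain m - m%:R * nbr_gain m.-1 + (d%:R - m%:R) * (beta * nbr_gain m).
Proof.
move=> mK; have K_ge0 : 0 <= K%:R :> R by [].
have gain_d : x * x <= beta * (d%:R - m%:R).
  have half_d : m%:R <= d%:R / 2 :> R.
    by rewrite ler_pdivlMr // -natrM ler_nat; lia.
  apply: le_trans (_ : beta * (d%:R / 2) <= _); last by rewrite ler_wpM2l //; lra.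
  by rewrite mulrA ler_pdivlMr // mulrC -expr2.
case: m mK gain_d => [|j] mK gain_d.
  rewrite hub_gain_small // (nbr_gain_small mK) -/x /=.
  rewrite mulr1 divr1 mul0r subr0 mulr1 subr0.
  have inf : 2 * x <= d%:R * (beta / x).
    by rewrite mulrA ler_pdivlMr // -mulrA -expr2 [d%:R * _]mulrC.
  by move: inf; move: (d%:R * (beta / x)) => T; rewrite xE; lra.
rewrite (hub_gain_small (ltnW mK)) (nbr_gain_small mK) (@nbr_gain_small j) -/x /=;
  last by lia.
have j_gt0 : 0 < (j.+1)%:R :> R by rewrite ltr0Sn.
have nbr : (j.+1)%:R / (x * (j.+1)%:R) = x^-1.
  by field; rewrite !gt_eqF // ?ltr_wpDr.
have inf : x / (j.+2)%:R <= (d%:R - (j.+1)%:R) * (beta / (x * (j.+2)%:R)).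
  rewrite invfM mulrA mulrA ler_wpM2r ?invr_ge0 ?ler0n //.
  by rewrite ler_pdivlMr // [_ * beta]mulrC.
have hub : - (K%:R / (j.+2)%:R) + x / (j.+2)%:R = (j.+2)%:R^-1.
  by rewrite -mulNr -mulrDl xE addrA addNr add0r mul1r.
have x_inv : x^-1 <= 1 by rewrite invf_le1 // xE; lra.
have j2_inv : 0 <= (j.+2)%:R^-1 :> R by rewrite invr_ge0.
rewrite nbr mulr0 addr0; move: inf hub x_inv j2_inv.
set a := K%:R / _; set b := x / _; set c := x^-1; set T := _ * (beta / _).
by set u := (j.+2)%:R^-1; clearbody a b c T u; lra.
Qed.

(* The drift of the potential while the hub is infected and has m infected
   neighbours: hub recovery, neighbour recoveries, neighbour infections. *)
Lemma hub_infected_drift m :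
  -1 + K%:R / 4 * (m == 0)%:R <=
  - hub_gain m - m%:R * nbr_gain m.-1 + (d%:R - m%:R) * (beta * nbr_gain m).
Proof.
by have [/hub_infected_drift_large|/hub_infected_drift_small] := leqP K m.
Qed.

(* The drift of the potential while the hub is healthy and has m infected
   neighbours: hub infection (external rate 2 plus the infected neighbours)
   and neighbour recoveries; neighbour infections can only increase it. *)
Lemma hub_healthy_drift m :
  -1 + K%:R / 4 * (m <= 1)%N%:R <=
  (beta * m%:R + 2) * hub_gain m - m%:R * (pot_out m - pot_out m.-1).
Proof.
have K_ge0 : 0 <= K%:R :> R by [].
case: m => [|j].
  by rewrite mul0r subr0 /hub_gain min0n divr1 mulr0 add0r mulr1; lra.
rewrite /= pot_outS.
have [Kj|jK] := leqP K j.
  rewrite (nbr_gain_large Kj) (hub_gain_large Kj) hub_gain_large ?(leqW Kj) //.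
  rewrite add0r subrr mulr0 subr0.
  have -> : K%:R / 4 * (j.+1 <= 1)%N%:R = 0 :> R.
    by case: j Kj => [|j] Kj; [rewrite leqn0 in Kj; rewrite (eqP Kj) !mul0r | rewrite mulr0].
  rewrite addr0; apply: le_trans (lerN10 _) _.
  by rewrite mulr_ge0 // ?divr_ge0 // addr_ge0 // mulr_ge0.
rewrite (hub_gain_small jK) (hub_gain_small (ltnW jK)) (nbr_gain_small jK) -/x.
have j_gt0 : 0 < (j.+1)%:R :> R by rewrite ltr0Sn.
have j2_gt0 : 0 < (j.+2)%:R :> R by rewrite ltr0Sn.
have -> : (beta * (j.+1)%:R + 2) * (K%:R / (j.+2)%:R) -
    (j.+1)%:R * ((x * (j.+1)%:R)^-1 + K%:R / (j.+1)%:R - K%:R / (j.+2)%:R) =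
    beta * (j.+1)%:R * (K%:R / (j.+2)%:R) + K%:R / (j.+2)%:R - x^-1.
  by rewrite /x; field; rewrite !gt_eqF // ?ltr_wpDr.
have hub_ge : K%:R / 4 * (j.+1 <= 1)%N%:R <= K%:R / (j.+2)%:R :> R.
  case: (j) => [|i] /=; last by rewrite mulr0 divr_ge0.
  by rewrite mulr1; lra.
have inf_ge0 : 0 <= beta * (j.+1)%:R * (K%:R / (j.+2)%:R).
  by apply: mulr_ge0; [apply: mulr_ge0 | apply: divr_ge0].
have x_inv : x^-1 <= 1 by rewrite invf_le1 // xE; lra.
move: hub_ge inf_ge0 x_inv.
set a := K%:R / 4 * _; set b := K%:R / _; set c := x^-1; set T := _ * b.
clearbody a b c T; lra.
Qed.

End HubPotential.

Section HubPolicy.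
Variables (R : realType) (n : nat) (e : rel 'I_n) (beta : R) (h : 'I_n) (K : nat).
Hypothesis e_sym : symmetric e.
Hypothesis e_irr : irreflexive e.
Hypothesis beta_ge0 : 0 <= beta.
Implicit Types (S T : {set 'I_n}) (j : 'I_n).

Definition hub_policy S j : R :=
  if (j == h) && (h \notin S) && (S != set0) then 2 else 0.

Lemma hub_policy_ge0 S j : 0 <= hub_policy S j.
Proof. by rewrite /hub_policy; case: ifP. Qed.

Lemma hub_policy_set0 j : hub_policy set0 j = 0.
Proof. by rewrite /hub_policy eqxx !andbF. Qed.

Lemma hub_policy_is_policy : is_policy 2 hub_policy.
Proof.
split; first exact: hub_policy_ge0.
split; last exact: hub_policy_set0.
move=> S; rewrite (bigD1 h) //= big1 ?addr0; first by rewrite /hub_policy eqxx; case: ifP.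
by move=> j /negbTE jh; rewrite /hub_policy jh.
Qed.

Definition infected_nbrs S := #|[set u in S | e h u]|.

Lemma infected_nbrsU1 j S : j \notin S ->
  infected_nbrs (j |: S) = (infected_nbrs S + e h j)%N.
Proof.
move=> jS; rewrite /infected_nbrs; case: (boolP (e h j)) => hj.
  have -> : [set u in j |: S | e h u] = j |: [set u in S | e h u].
    by apply/setP => u; rewrite !inE; case: (eqVneq u j) => [->|]; rewrite ?hj.
  by rewrite cardsU1 inE (negbTE jS) addnC.
have -> : [set u in j |: S | e h u] = [set u in S | e h u].
  apply/setP => u; rewrite !inE; case: (eqVneq u j) => [->|] //=.
  by rewrite (negbTE hj) !andbF.
by rewrite addn0.
Qed.

Lemma infected_nbrsD1 j S : j \in S ->
  infected_nbrs (S :\ j) = (infected_nbrs S - e h j)%N.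
Proof.
move=> jS; rewrite /infected_nbrs; case: (boolP (e h j)) => hj.
  have -> : [set u in S :\ j | e h u] = [set u in S | e h u] :\ j.
    by apply/setP => u; rewrite !inE andbA.
  by rewrite (cardsD1 j [set u in S | e h u]) inE jS hj /= add1n subn1.
have -> : [set u in S :\ j | e h u] = [set u in S | e h u].
  apply/setP => u; rewrite !inE; case: (eqVneq u j) => [->|] //=.
  by rewrite (negbTE hj) !andbF.
by rewrite subn0.
Qed.

Lemma infected_nbrs_card S : (infected_nbrs S + (h \in S) <= #|S|)%N.
Proof.
rewrite (cardsD1 h S) addnC leq_add2l; apply: subset_leq_card.
apply/fintype.subsetP => u; rewrite !inE => /andP[uS hu]; rewrite uS andbT.
by apply/eqP => uh; move: hu; rewrite uh e_irr.
Qed.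

Definition pot S : R :=
  if h \in S then pot_in R K (infected_nbrs S) else pot_out R K (infected_nbrs S).

Definition lyap S : R := pot S + K%:R / 4 * alive R S.

Local Notation infection_rate := (infection_rate e beta hub_policy).
Local Notation drift := (drift e beta hub_policy).

Lemma infection_rate_hub S : h \notin S -> S != set0 ->
  infection_rate S h = beta * (infected_nbrs S)%:R + 2.
Proof.
move=> hS S0; rewrite /infection_rate /hub_policy eqxx hS S0 /infected_nbrs.
by congr (beta * _%:R + _); apply: eq_card => u; rewrite !inE e_sym.
Qed.

Lemma infection_rate_nbr S j : h \in S -> e h j -> beta <= infection_rate S j.
Proof.
move=> hS hj; rewrite /infection_rate -[leLHS]addr0 lerD ?hub_policy_ge0 //.
rewrite -[leLHS]mulr1 ler_wpM2l // ler1n.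
by apply/card_gt0P; exists h; rewrite inE hS hj.
Qed.

Definition node_drift S j : R :=
  if j \in S then pot (S :\ j) - pot S
  else infection_rate S j * (pot (j |: S) - pot S).

Definition node_drift_lb S j : R :=
  (j == h)%:R *
    (if h \in S then - hub_gain R K (infected_nbrs S)
     else (beta * (infected_nbrs S)%:R + 2) * hub_gain R K (infected_nbrs S))
  + (e h j && (j \in S))%:R *
    (if h \in S then - nbr_gain R K (infected_nbrs S).-1
     else - (pot_out R K (infected_nbrs S) - pot_out R K (infected_nbrs S).-1))
  + (e h j && (j \notin S))%:R *
    (if h \in S then beta * nbr_gain R K (infected_nbrs S) else 0).

Lemma drift_potE S : drift pot S = \sum_j node_drift S j.
Proof.
rewrite driftE [RHS](bigID (fun j => j \in S)) /= addrC; congr (_ + _).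
  by apply: eq_bigr => j jS; rewrite /node_drift (negbTE jS).
by apply: eq_bigr => j jS; rewrite /node_drift jS.
Qed.

Lemma node_drift_ge_lb S j : S != set0 -> node_drift_lb S j <= node_drift S j.
Proof.
move=> S0; rewrite /node_drift_lb /node_drift.
have le_of_eq (x y : R) : x = y -> x <= y by move->.
have ehh : e h h = false := e_irr h.
case: (eqVneq j h) => [->|jh].
  rewrite ehh /= mul1r !mul0r !addr0.
  case: (boolP (h \in S)) => hS.
    rewrite /pot setD11 hS infected_nbrsD1 // ehh subn0.
    by apply: le_of_eq; rewrite /pot_out; ring.
  rewrite infection_rate_hub // /pot setU11 (negbTE hS) infected_nbrsU1 // ehh addn0.
  by apply: le_of_eq; rewrite /pot_out; congr (_ * _); ring.
rewrite mul0r add0r.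
have hSD : (h \in S :\ j) = (h \in S) by rewrite in_setD1 eq_sym jh.
have hSU : (h \in j |: S) = (h \in S) by rewrite in_setU1 eq_sym (negbTE jh).
case: (boolP (e h j)) => hj; last first.
  rewrite !andFb !mul0r addr0.
  case: (boolP (j \in S)) => jS.
    by rewrite /pot hSD infected_nbrsD1 // (negbTE hj) subn0 subrr.
  by rewrite /pot hSU infected_nbrsU1 // (negbTE hj) addn0 subrr mulr0.
rewrite !andTb.
case: (boolP (j \in S)) => jS /=.
  rewrite mul1r mul0r addr0 /pot hSD infected_nbrsD1 // hj subn1.
  have : (0 < infected_nbrs S)%N by apply/card_gt0P; exists j; rewrite inE jS hj.
  case: (infected_nbrs S) => [//|k] _ /=.
  by case: (h \in S); apply: le_of_eq; [rewrite pot_inS | ]; ring.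
rewrite mul0r mul1r add0r /pot hSU infected_nbrsU1 // hj addn1.
case: (boolP (h \in S)) => hS.
  rewrite pot_inS addrAC subrr add0r ler_wpM2r ?nbr_gain_ge0 //.
  exact: infection_rate_nbr.
apply: mulr_ge0; first exact: (@infection_rate_ge0 _ _ e _ hub_policy beta_ge0 hub_policy_ge0).
by rewrite subr_ge0 pot_out_nondecr.
Qed.

Lemma sum_nat_indicator (P : pred 'I_n) (Y : R) : \sum_j (P j)%:R * Y = #|P|%:R * Y.
Proof.
rewrite -mulr_suml -sum1_card natr_sum [in RHS]big_mkcond /=.
by congr (_ * _); apply: eq_bigr => j _; rewrite unfold_in; case: (P j).
Qed.

Lemma sum_node_drift_lb S : \sum_j node_drift_lb S j =
  (if h \in S then - hub_gain R K (infected_nbrs S)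
   else (beta * (infected_nbrs S)%:R + 2) * hub_gain R K (infected_nbrs S))
  + (infected_nbrs S)%:R *
    (if h \in S then - nbr_gain R K (infected_nbrs S).-1
     else - (pot_out R K (infected_nbrs S) - pot_out R K (infected_nbrs S).-1))
  + ((deg e h)%:R - (infected_nbrs S)%:R) *
    (if h \in S then beta * nbr_gain R K (infected_nbrs S) else 0).
Proof.
rewrite /node_drift_lb !big_split /= !sum_nat_indicator.
have card_hub : #|(fun j => j == h) : pred 'I_n| = 1%N.
  by rewrite -(card1 h); apply: eq_card => u; rewrite !inE.
have card_in : #|(fun j => e h j && (j \in S)) : pred 'I_n| = infected_nbrs S.
  by apply: eq_card => u; rewrite !inE andbC.
have card_out : #|(fun j => e h j && (j \notin S)) : pred 'I_n|%:R =
    (deg e h)%:R - (infected_nbrs S)%:R :> R.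
  rewrite /deg -(cardID (mem S) [set u | e h u]) natrD.
  have -> : #|[predI [set u | e h u] & mem S]| = infected_nbrs S.
    by apply: eq_card => u; rewrite !inE andbC.
  rewrite addrAC subrr add0r.
  by congr _%:R; apply: eq_card => u; rewrite -topredE /= !inE andbC.
by rewrite card_hub card_in card_out mul1r.
Qed.

Lemma drift_pot_ge S : S != set0 -> \sum_j node_drift_lb S j <= drift pot S.
Proof. by move=> S0; rewrite drift_potE; apply: ler_sum => j _; exact: node_drift_ge_lb. Qed.

Lemma drift_alive_ge S : S != set0 -> - (#|S| == 1)%N%:R <= drift (alive R) S.
Proof.
move=> S0; rewrite driftE big1 ?add0r; last first.
  move=> j _; rewrite /alive S0.
  have -> : j |: S != set0 by apply/set0Pn; exists j; rewrite setU11.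
  by rewrite subrr mulr0.
case: (boolP (#|S| == 1)%N) => [/cards1P [v ->]|S1].
  have v0 : [set v] != set0 by apply/set0Pn; exists v; rewrite set11.
  by rewrite big_set1 /alive finset.setDv eqxx v0 sub0r.
rewrite big1 ?oppr0 // => j jS; rewrite /alive S0.
have -> : S :\ j != set0.
  by apply/eqP => SD; move: S1; rewrite (cardsD1 j S) jS SD cards0.
by rewrite subrr.
Qed.

Lemma lyap_set0 : lyap set0 = 0.
Proof.
rewrite /lyap /pot inE /alive eqxx mulr0 addr0.
have -> : infected_nbrs set0 = 0%N.
  by apply/eqP; rewrite cards_eq0; apply/eqP/setP => u; rewrite !inE.
exact: pot_out0.
Qed.

Lemma lyap_ge S : S != set0 -> K%:R / 4 <= lyap S.
Proof.
move=> S0; rewrite /lyap /alive S0 mulr1 lerDr /pot; case: ifP => _.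
  exact: le_trans (ler0n _ _) (pot_in_ge _ _ _).
exact: pot_out_ge0.
Qed.

Hypothesis K_le_deg : (2 * K <= deg e h)%N.
Hypothesis beta_deg_ge : 2 * (K.+1)%:R ^+ 2 <= beta * (deg e h)%:R.

(* Dying costs the bonus K/4, but a state with |S| = 1 has m = 0 when the
   hub is infected and m <= 1 otherwise, where the potential bounds have
   K/4 of slack. *)
Lemma drift_lyap_ge S : S != set0 -> -1 <= drift lyap S.
Proof.
move=> S0; rewrite drift_lin.
have pot_ge := drift_pot_ge S0; rewrite sum_node_drift_lb in pot_ge.
have card_S := infected_nbrs_card S.
suff [c [pot_c one_S]] : exists c,
    -1 + c <= drift pot S /\ K%:R / 4 * (#|S| == 1)%N%:R <= c.
  have bonus_ge0 : 0 <= K%:R / 4 :> R by rewrite divr_ge0.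
  have := ler_wpM2l bonus_ge0 (drift_alive_ge S0); rewrite mulrN.
  move: pot_c one_S; set b := K%:R / 4 * _; set D := K%:R / 4 * _.
  by move: (drift pot S) => P; clearbody b D; lra.
case: (boolP (h \in S)) => hS /= in pot_ge card_S *.
  exists (K%:R / 4 * (infected_nbrs S == 0)%:R); split.
    apply: le_trans (hub_infected_drift beta_ge0 K_le_deg beta_deg_ge _) _.
    by rewrite mulrN in pot_ge.
  rewrite ler_wpM2l // ler_nat; case: eqP => // S1.
  by move: card_S; rewrite S1 addn1 ltnS leqn0 => ->.
exists (K%:R / 4 * (infected_nbrs S <= 1)%N%:R); split.
  apply: le_trans (hub_healthy_drift K beta_ge0 _) _.
  by move: pot_ge; rewrite mulr0 addr0 mulrN.
rewrite ler_wpM2l // ler_nat; case: eqP => // S1.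
by move: card_S; rewrite S1 addn0 => ->.
Qed.

Lemma ET_hub_policy A : A != set0 -> ((K%:R / 8)%:E <= ET e beta hub_policy A)%E.
Proof.
move=> A0.
have := ET_ge_potential beta_ge0 hub_policy_ge0 hub_policy_set0 A lyap_set0 drift_lyap_ge.
apply: le_trans; rewrite lee_fin.
by have := lyap_ge A0; lra.
Qed.

End HubPolicy.

Definition max_hub_policy (R : realType) n (e : rel 'I_n) : {set 'I_n} -> 'I_n -> R :=
  if [pick v | deg e v == dmax e] is Some h then hub_policy R h else fun _ _ => 0.

Lemma max_hub_policy_is_policy (R : realType) n (e : rel 'I_n) :
  is_policy 2 (max_hub_policy R e).
Proof.
rewrite /max_hub_policy; case: pickP => [h _|_]; first exact: hub_policy_is_policy.
by split=> //; split=> // S; rewrite big1.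
Qed.

Lemma ET_max_hub_policy (R : realType) n (e : rel 'I_n) (beta : R) (K : nat)
    (A : {set 'I_n}) :
  (0 < n)%N -> simple_graph e -> 0 <= beta ->
  (2 * K <= dmax e)%N -> 2 * (K.+1)%:R ^+ 2 <= beta * (dmax e)%:R ->
  A != set0 -> ((K%:R / 8)%:E <= ET e beta (max_hub_policy R e) A)%E.
Proof.
move=> n_gt0 [e_sym e_irr] beta_ge0 K_le_deg beta_deg_ge A0; rewrite /max_hub_policy.
case: pickP => [h /eqP hub|no_hub]; last first.
  have [v v_max] := @bigop.eq_bigmax 'I_n (deg e) (ltac:(by rewrite card_ord)).
  by move: (no_hub v); rewrite /dmax v_max eqxx.
rewrite -hub in K_le_deg beta_deg_ge.
exact: ET_hub_policy.
Qed.

Lemma powR_lower_bounds (R : realType) (alpha eps c1 c2 c kap x d b : R) :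
  0 < c1 -> 0 < c2 -> 0 <= c -> c <= c1 -> c <= c1 * c2 ->
  kap <= alpha -> kap <= alpha * eps -> 1 <= x ->
  c1 * x `^ alpha <= d -> c2 * x `^ (- (alpha * (1 - eps))) <= b ->
  c * x `^ kap <= d /\ c * x `^ kap <= b * d.
Proof.
move=> c1_gt0 c2_gt0 c_ge0 c_c1 c_c12 kap_alpha kap_eps x1 hd hb.
have x0 : 0 < x by lra.
have xk_ge0 := powR_ge0 x kap.
split; first by apply: le_trans hd; apply: ler_pM => //; exact: ler_powR.
have bd : c1 * c2 * x `^ (alpha * eps) <= b * d.
  have -> : c1 * c2 * x `^ (alpha * eps) =
      c2 * x `^ (- (alpha * (1 - eps))) * (c1 * x `^ alpha).
    rewrite mulrACA [c1 * c2]mulrC -powRD; last by apply/implyP => _; rewrite gt_eqF.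
    by congr (_ * _ `^ _); ring.
  by apply: ler_pM => //; rewrite mulr_ge0 ?powR_ge0 ?ltW.
by apply: le_trans bd; apply: ler_pM => //; exact: ler_powR.
Qed.

Lemma powR_eventually_ge (R : realType) (a C lam : R) : 0 <= a -> 0 < C -> 0 < lam ->
  forall n : nat, (Num.truncn ((a / C) `^ lam^-1) < n)%N -> a <= C * n%:R `^ lam.
Proof.
move=> a_ge0 C_gt0 lam_gt0 n n_large.
set w := (a / C) `^ lam^-1.
have w_le : w <= n%:R.
  by apply/ltW/(lt_le_trans (truncnS_gt w)); rewrite ler_nat.
have : w `^ lam <= n%:R `^ lam.
  by apply: ge0_ler_powR; rewrite ?nnegrE ?powR_ge0 ?(ltW lam_gt0).
rewrite /w -powRrM mulVf ?gt_eqF // powRr1 ?divr_ge0 ?(ltW C_gt0) //.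
by rewrite ler_pdivrMr // [C * _]mulrC.
Qed.

Lemma level_bounds (R : realFieldType) (c y k d bd : R) :
  0 < c <= 1 -> 1 <= y -> 6 <= c * y -> k <= c * y / 3 < k + 1 -> 0 <= k ->
  c * (y * y) <= d -> c * (y * y) <= bd ->
  [/\ 2 * k <= d, 2 * (k + 1) ^+ 2 <= bd & c / 48 * y <= k / 8].
Proof.
move=> /andP[c_gt0 c_le1] y_ge1 cy_ge6 /andP[k_le k_gt] k_ge0 d_ge bd_ge.
have cy_le : c * y <= c * (y * y).
  by apply: ler_wpM2l; [exact: ltW | rewrite ler_peMr //; lra].
have sq_le : (k + 1) ^+ 2 <= (c * y / 2) ^+ 2.
  by rewrite lerXn2r ?nnegrE //; lra.
have c2_le : (c * y / 2) ^+ 2 <= c * (y * y) / 4.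
  have -> : (c * y / 2) ^+ 2 = c * (c * (y * y)) / 4 by field.
  have y_ge0 : 0 <= y by lra.
  by rewrite ler_wpM2r // ler_piMl // !mulr_ge0 // ltW.
rewrite mulrAC; move: cy_ge6 k_le k_gt d_ge bd_ge cy_le sq_le c2_le.
set t := c * y; set u := c * (y * y); set s := (k + 1) ^+ 2; set v := _ ^+ 2.
by clearbody t u s v => *; split; lra.
Qed.

(* Take K ~ c n^lam / 3 with 2 lam = alpha min(1, eps): then both d and
   beta d are at least c n^(2 lam). *)
Lemma hub_level_exists (R : realType) (alpha eps c1 c2 : R) :
  0 < alpha -> 0 < eps -> 0 < c1 -> 0 < c2 ->
  exists lam : R, 0 < lam /\ exists C : R, 0 < C /\ exists N : nat,
  forall (n d : nat) (b : R), (N <= n)%N ->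
    c1 * n%:R `^ alpha <= d%:R -> c2 * n%:R `^ (- (alpha * (1 - eps))) <= b ->
    exists K : nat, [/\ (2 * K <= d)%N, 2 * (K.+1)%:R ^+ 2 <= b * d%:R
                      & C * n%:R `^ lam <= K%:R / 8].
Proof.
move=> alpha_gt0 eps_gt0 c1_gt0 c2_gt0.
pose c := Num.min (Num.min c1 (c1 * c2)) 1.
pose kap := alpha * Num.min 1 eps.
have c_gt0 : 0 < c by rewrite !lt_min c1_gt0 mulr_gt0 ?ltr01.
have c_le1 : c <= 1 by rewrite ge_min lexx orbT.
have c_c1 : c <= c1 by rewrite !ge_min lexx.
have c_c12 : c <= c1 * c2 by rewrite !ge_min lexx orbT.
have kap_alpha : kap <= alpha by apply: ler_piMr; [exact: ltW | rewrite ge_min lexx].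
have kap_eps : kap <= alpha * eps.
  by apply: ler_wpM2l; [exact: ltW | rewrite ge_min lexx orbT].
have lam_gt0 : 0 < kap / 2 by rewrite divr_gt0 // mulr_gt0 // lt_min ltr01.
exists (kap / 2); split => //; exists (c / 48); split; first by rewrite divr_gt0.
exists (Num.truncn ((6 / c) `^ (kap / 2)^-1)).+1 => n d b n_large hd hb.
have n_ge1 : 1 <= n%:R :> R by rewrite ler1n; apply: leq_trans n_large.
set y := n%:R `^ (kap / 2).
have yy : y * y = n%:R `^ kap.
  rewrite /y -powRD; first by congr (_ `^ _); field.
  by apply/implyP => _; rewrite gt_eqF // (lt_le_trans ltr01 n_ge1).
have y_ge1 : 1 <= y by have := ler_powR n_ge1 (ltW lam_gt0); rewrite powRr0.
have [d_ge bd_ge] := powR_lower_bounds c1_gt0 c2_gt0 (ltW c_gt0) c_c1 c_c12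
  kap_alpha kap_eps n_ge1 hd hb.
rewrite -yy in d_ge bd_ge.
have cy_ge6 : 6 <= c * y by apply: powR_eventually_ge.
set k := Num.truncn (c * y / 3); exists k.
have c01 : 0 < c <= 1 by rewrite c_gt0 c_le1.
have k_bounds : k%:R <= c * y / 3 < k%:R + 1.
  apply/andP; split; first by rewrite truncn_le; lra.
  by have := truncnS_gt (c * y / 3); rewrite -[(Num.truncn _).+1]addn1 natrD.
have [k_d k_bd k_C] := level_bounds c01 y_ge1 cy_ge6 k_bounds (ler0n _ _) d_ge bd_ge.
split => //; first by rewrite -(ler_nat R) natrM.
by rewrite -[(k.+1)%:R]natr1.
Qed.

Theorem theorem3 (R : realType) (e : forall n : nat, rel 'I_n) (beta : nat -> R)
    (A : forall n : nat, {set 'I_n}) :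
  (forall n, simple_graph (e n)) ->
  (forall n, 0 <= beta n) ->
  (forall n, (0 < n)%N -> A n != @finset.set0 _) ->
  (exists alpha : R, 0 < alpha /\
     (exists c : R, 0 < c /\ exists N : nat, forall n : nat, (N <= n)%N ->
        c * (n%:R `^ alpha) <= (dmax (e n))%:R) /\
     (exists eps : R, 0 < eps /\ exists c : R, 0 < c /\ exists N : nat,
        forall n : nat, (N <= n)%N ->
        c * (n%:R `^ (- (alpha * (1 - eps)))) <= beta n)) ->
  exists M : R, exists L : forall n : nat, {set 'I_n} -> 'I_n -> R,
    (forall n, is_policy M (L n)) /\
    exists lam : R, 0 < lam /\ exists C : R, 0 < C /\ exists N : nat,
      forall n : nat, (N <= n)%N ->
        ((C * (n%:R `^ lam))%:E <= ET (e n) (beta n) (L n) (A n))%E.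
Proof.
move=> e_simple beta_ge0 A0
  [alpha [alpha_gt0 [[c1 [c1_gt0 [N1 hd]]] [eps [eps_gt0 [c2 [c2_gt0 [N2 hb]]]]]]]].
have [lam [lam_gt0 [C [C_gt0 [N0 level]]]]] :=
  hub_level_exists alpha_gt0 eps_gt0 c1_gt0 c2_gt0.
exists 2, (fun n => max_hub_policy R (e n)); split=> [n|].
  exact: max_hub_policy_is_policy.
exists lam; split=> //; exists C; split=> //.
exists (maxn (maxn N0 1) (maxn N1 N2)) => n.
rewrite !geq_max => /andP[/andP[nN0 n_gt0] /andP[nN1 nN2]].
have [K [K_le_deg beta_deg_ge C_le]] := level n _ _ nN0 (hd n nN1) (hb n nN2).
apply: le_trans (ET_max_hub_policy n_gt0 (e_simple n) (beta_ge0 n)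
  K_le_deg beta_deg_ge (A0 n n_gt0)).
by rewrite lee_fin.
Qed.
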